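(* Let $s,t$ be real numbers. For every integer $n\geq 3$, $$\det W_n = (-1)^{n-1}\Big( s^{n-1}t + \Big\lfloor \frac{n}{2}\Big\rfloor\Big\lfloor\frac{n-1}{2}\Big\rfloor s^{n-3}t^3\Big).$$
   Context: All matrices below are $n\times n$ upper Hessenberg with subdiagonal entries $a_{i+1,i}=s$ and $a_{ij}=0$ for $i>j+1$; only the entries $a_{ij}$ with $i\le j$ are specified. For $n = 2k+1$ ($k\ge 1$), $W_n$ has: $a_{1j}=t$ for $1\le j\le k$, $a_{1j}=0$ for $k+1\le j\le 2k$, $a_{1n}=t$; for $2\le i\le k+1$: $a_{ij}=0$ for $i\le j\le k$, $a_{ij}=t$ for $k+1\le j\le 2k$, $a_{in}=0$; for $k+2\le i\le n$: $a_{ij}=0$ for $i\le j\le 2k$, $a_{in}=t$. For $n=2k+2$ ($k\ge 0$), $W_n$ has: $a_{1j}=t$ for $1\le j\le k$, $a_{1j}=0$ for $k+1\le j\le 2k+1$, $a_{1n}=t$; for $2\le i\le k+1$: $a_{ij}=0$ for $i\le j\le k$, $a_{ij}=t$ for $k+1\le j\le 2k+1$, $a_{in}=0$; for $k+2\le i\le n$: $a_{ij}=0$ for $i\le j\le 2k+1$, $a_{in}=t$. *)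

From HB Require Import structures.
From mathcomp Require Import all_boot all_order all_algebra.
From mathcomp Require Import reals.
Set Implicit Arguments. Unset Strict Implicit. Unset Printing Implicit Defensive.
Import Order.TTheory GRing.Theory Num.Theory.
Local Open Scope ring_scope.

(* Entry (i', j') of W_n, with 1-based indices i' j' in 1..n.
   kk = floor((n-1)/2): for n = 2k+1 this is k, for n = 2k+2 it is k. *)
Definition W_entry (R : nzRingType) (s t : R) (n i' j' : nat) : R :=
  let kk := (n.-1)./2 in
  if i' == j'.+1 then s
  else if (j' < i')%N then 0
  else if i' == 1%N then (if (j' <= kk)%N || (j' == n) then t else 0)
  else if (i' <= kk.+1)%N then (if (kk.+1 <= j')%N && (j' <= n.-1)%N then t else 0)
  else (if j' == n then t else 0).

Definition W (R : nzRingType) (s t : R) (n : nat) : 'M[R]_n :=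
  \matrix_(i < n, j < n) W_entry s t n i.+1 j.+1.

From HB Require Import structures.
From mathcomp Require Import all_boot all_order all_algebra.
From mathcomp Require Import reals.
From mathcomp Require Import zify ring.

Import Order.TTheory GRing.Theory Num.Theory.
Set Implicit Arguments.
Unset Strict Implicit.
Local Open Scope ring_scope.

(* For an upper Hessenberg matrix with constant subdiagonal s, expanding the
   leading principal minor D_(k+1) along its last column gives
   D_(k+1) = sum_(i <= k) (-s)^(k-i) a_(i,k) D_i.  With m = floor((n-1)/2), the
   columns j < m of W_n carry t only in row 0, so D_(j+1) = (-s)^j t; the
   middle columns carry t exactly in rows 1..m, so D_(j+1) = m (-s)^(j-1) t^2;
   the last column carries t in row 0 and in the floor(n/2) rows below m,
   whence det W_n = (-s)^(n-1) t + floor(n/2) m (-s)^(n-3) t^3. *)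

Lemma sum_nat_split3 (V : nmodType) (F : nat -> V) (m k : nat) : (m <= k)%N ->
  \sum_(0 <= i < k.+1) F i =
    F 0%N + \sum_(1 <= i < m.+1) F i + \sum_(m.+1 <= i < k.+1) F i.
Proof. by move=> le_mk; rewrite big_ltn // -addrA -big_cat_nat. Qed.

Lemma sumr_const_nat_in (V : nmodType) (c : V) (F : nat -> V) (m k : nat) :
  (forall i, (m <= i < k)%N -> F i = c) -> \sum_(m <= i < k) F i = c *+ (k - m).
Proof. by move=> Fc; rewrite -sumr_const_nat; apply: eq_big_nat. Qed.

Section HessenbergMinors.
Variables (R : comNzRingType) (s : R) (a : nat -> nat -> R).
Hypothesis a_subdiag : forall q, a q.+1 q = s.
Hypothesis a_below_subdiag : forall p q, (q.+1 < p)%N -> a p q = 0.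

Definition principal_mx k : 'M[R]_k := \matrix_(i < k, j < k) a i j.

Lemma det_principal_mx_drop_row i k : (i <= k)%N ->
  \det (\matrix_(p < k, q < k) a (bump i p) q) = s ^+ (k - i) * \det (principal_mx i).
Proof.
(* Below row i the rows of the minor are subdiagonal rows: expanding along the
   last one, whose only nonzero entry is s, peels off one factor s. *)
elim: k => [|k IHk] le_ik.
  by move: le_ik; rewrite leqn0 => /eqP ->; rewrite !det_mx00 expr0 mul1r.
case: (ltngtP i k.+1) le_ik => // [lt_ik|->] _; last first.
  rewrite subnn expr0 mul1r; congr (\det _); apply/matrixP => p q.
  by rewrite !mxE /bump leqNgt (ltn_ord p).
have bump_max : bump i k = k.+1 by rewrite /bump -ltnS lt_ik.
rewrite (expand_det_row _ ord_max) big_ord_recr /= big1 ?add0r; last first.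
  by move=> j _; rewrite !mxE bump_max a_below_subdiag ?mul0r //= ltnS.
rewrite !mxE bump_max a_subdiag /cofactor addnn -signr_odd odd_double expr0 mul1r.
rewrite (_ : \det (row' _ _) = \det (\matrix_(p < k, q < k) a (bump i p) q)).
  by rewrite IHk // subSn // exprS mulrA.
by congr (\det _); apply/matrixP => p q; rewrite !mxE !lift_max.
Qed.

Lemma det_principal_mxS k : \det (principal_mx k.+1) =
  \sum_(0 <= i < k.+1) (-s) ^+ (k - i) * a i k * \det (principal_mx i).
Proof.
rewrite big_mkord (expand_det_col _ ord_max); apply: eq_bigr => i _.
have le_ik : (i <= k)%N by rewrite -ltnS.
rewrite /cofactor (_ : \det (row' _ _) = \det (\matrix_(p < k, q < k) a (bump i p) q)); last first.
  by congr (\det _); apply/matrixP => p q; rewrite !mxE lift_max.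
rewrite det_principal_mx_drop_row // mxE /=.
have -> : (-1) ^+ (i + k) = (-1) ^+ (k - i) :> R.
  by rewrite -signr_odd -[RHS]signr_odd oddD oddB // addbC.
rewrite -[- s]mulN1r exprMn; ring.
Qed.

End HessenbergMinors.

Section DetW.
Variables (R : comNzRingType) (s t : R) (n : nat).
Hypothesis n_ge3 : (3 <= n)%N.

Local Notation m := (n.-1)./2.
Let a i j := W_entry s t n i.+1 j.+1.

Ltac W_entry_cases :=
  rewrite /a /W_entry; repeat (case: ifP => /= ?); done || lia.

Lemma W_subdiag q : a q.+1 q = s.
Proof. by rewrite /a /W_entry eqxx. Qed.

Lemma W_below_subdiag p q : (q.+1 < p)%N -> a p q = 0.
Proof. move=> ?; W_entry_cases. Qed.

Lemma W_left_col i j : (i <= j)%N -> (j < m)%N -> a i j = if i == 0%N then t else 0.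
Proof. move=> ? ?; W_entry_cases. Qed.

Lemma W_middle_col i j : (i <= j)%N -> (m <= j < n.-1)%N ->
  a i j = if (1 <= i <= m)%N then t else 0.
Proof. move=> ? ?; W_entry_cases. Qed.

Lemma W_last_col i : (i <= n.-1)%N -> a i n.-1 = if (1 <= i <= m)%N then 0 else t.
Proof. move=> ?; W_entry_cases. Qed.

Lemma det_W_principal_left k : (k < m)%N -> \det (principal_mx a k.+1) = (-s) ^+ k * t.
Proof.
move=> lt_km; rewrite (det_principal_mxS W_subdiag W_below_subdiag) big_ltn //.
rewrite (sumr_const_nat_in (c := 0)); last first.
  by move=> i /andP[? ?]; rewrite W_left_col ?ifN ?mulr0 ?mul0r //; lia.
by rewrite W_left_col //= subn0 det_mx00 mul0rn addr0 mulr1.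
Qed.

Lemma det_W_principal_middle k : (m <= k < n.-1)%N ->
  \det (principal_mx a k.+1) = m%:R * (-s) ^+ k.-1 * t ^+ 2.
Proof.
move=> k_range; have /andP[le_mk _] := k_range.
rewrite (det_principal_mxS W_subdiag W_below_subdiag) (sum_nat_split3 _ le_mk).
rewrite (sumr_const_nat_in (m := 1) (c := ((-s) ^+ k.-1 * t ^+ 2))); last first.
  move=> [|i] // /andP[_ lt_im]; rewrite W_middle_col ?ifT ?det_W_principal_left; try lia.
  by rewrite (_ : k.-1 = k - i.+1 + i)%N ?exprD; [ring | lia].
rewrite (sumr_const_nat_in (m := m.+1) (c := 0)); last first.
  by move=> i /andP[? ?]; rewrite W_middle_col ?ifF ?mulr0 ?mul0r //; lia.
by rewrite W_middle_col //= subn1; ring.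
Qed.

Lemma det_W : \det (W s t n) =
  (-s) ^+ n.-1 * t + ((n./2 * m)%N)%:R * (-s) ^+ (n - 3) * t ^+ 3.
Proof.
have n_eq : n = n.-1.+1 by lia.
have le_mn : (m <= n.-1)%N by lia.
rewrite (_ : \det (W s t n) = \det (principal_mx a n.-1.+1)); last by rewrite -n_eq.
rewrite (det_principal_mxS W_subdiag W_below_subdiag) (sum_nat_split3 _ le_mn).
rewrite (sumr_const_nat_in (m := 1) (c := 0)); last first.
  by move=> i /andP[? ?]; rewrite W_last_col ?ifT ?mulr0 ?mul0r //; lia.
rewrite (sumr_const_nat_in (m := m.+1) (c := (m%:R * (-s) ^+ (n - 3) * t ^+ 3))); last first.
  move=> [|i] // /andP[lt_mi lt_in].
  rewrite W_last_col ?ifF ?det_W_principal_middle; try lia.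
  by rewrite (_ : n - 3 = n.-1 - i.+1 + i.-1)%N ?exprD; [ring | lia].
rewrite W_last_col //= subn0 det_mx00 mulr1 mul0rn addr0 -n_eq.
by rewrite (_ : n - m.+1 = n./2)%N; [ring | lia].
Qed.

End DetW.

Theorem proposition5p5 (R : realType) (s t : R) (n : nat) :
  (3 <= n)%N ->
  \det (W s t n) =
    (-1) ^+ (n.-1) *
    (s ^+ (n.-1) * t + ((n./2 * (n.-1)./2)%N)%:R * s ^+ (n - 3) * t ^+ 3).
Proof.
move=> n_ge3; rewrite det_W //.
have sign_shift : (-1) ^+ (n - 3) = (-1) ^+ n.-1 :> R.
  by rewrite [in RHS](_ : n.-1 = n - 3 + 2)%N ?exprD ?sqrrN ?expr1n ?mulr1 //; lia.
rewrite -[- s]mulN1r !exprMn sign_shift; ring.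
Qed.
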